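(* Let $G=(V,E)$ be a connected, locally finite graph, with arc set $A=\{(u,v):\{u,v\}\in E\}$. Let $m_V:V\to(0,\infty)$, $m_A:A\to(0,\infty)$ and $w:A\to\mathbb{C}$ be functions. Define $d$, $d^*$, $S$ and $U=S(2d^*d-1_A)$ as in the context. Suppose that one of the following two settings holds: (Setting 1) $\sum_{e\in A:\,o(e)=u}|w(e)|^2=1$ for all $u\in V$, and $m_V(u)=1$, $m_A(e)=1$ for all $u\in V$, $e\in A$; (Setting 2) $\sum_{e\in A:\,o(e)=u}w(e)=1$ for all $u\in V$, and $m_A(e)=m_V(o(e))\,w(e)=m_V(t(e))\,w(\bar e)$ for all $e\in A$. Then $U$ preserves the norm of $\ell^2(m_A;A)$: $\|U\psi\|_{m_A,A}=\|\psi\|_{m_A,A}$ for every $\psi\in\ell^2(m_A;A)$.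
   Context: For an arc $e=(u,v)\in A$, $o(e)=u$ is its origin, $t(e)=v$ its terminus, and $\bar e=(v,u)$ its inverse arc. $\ell^2(m_V;V)$ and $\ell^2(m_A;A)$ are the spaces of square-summable complex functions on $V$, resp. $A$, with inner products $\langle f_1,f_2\rangle_{m_V,V}=\sum_{u\in V}\overline{f_1(u)}f_2(u)m_V(u)$ and $\langle\psi_1,\psi_2\rangle_{m_A,A}=\sum_{e\in A}\overline{\psi_1(e)}\psi_2(e)m_A(e)$. The boundary operator is $(d\psi)(u)=\sum_{e\in A:\,t(e)=u}\overline{w(\bar e)}\,\psi(e)$, its adjoint (with respect to these inner products) is $(d^*f)(e)=f(t(e))\,m_V(t(e))\,w(\bar e)/m_A(e)$, the shift is $(S\psi)(e)=\psi(\bar e)$, and $1_A$ is the identity on functions on $A$. *)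

From HB Require Import structures.
From mathcomp Require Import all_boot all_order all_algebra.
From mathcomp Require Import complex.
From mathcomp Require Import all_classical all_reals all_analysis.
Set Implicit Arguments. Unset Strict Implicit. Unset Printing Implicit Defensive.
Import Order.TTheory GRing.Theory Num.Theory.
Local Open Scope ring_scope.
Local Open Scope classical_set_scope.
Local Open Scope complex_scope.

Section QuantumWalk.
Context {R : realType} {V : choiceType}.

(* A graph on V is given by its (symmetric) adjacency relation [adj];
   {u,v} is an edge iff adj u v.  Arcs are ordered pairs e = (o(e), t(e)). *)

Definition symmetric_adj (adj : V -> V -> bool) := forall u v, adj u v = adj v u.

Definition locally_finite (adj : V -> V -> bool) :=
  forall u, finite_set [set v | adj u v].

Definition graph_connected (adj : V -> V -> bool) :=
  forall u v : V, exists s : seq V, path adj u s && (last u s == v).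

Definition arcs (adj : V -> V -> bool) : set (V * V) := [set e | adj e.1 e.2].

Definition orig (e : V * V) : V := e.1.
Definition term (e : V * V) : V := e.2.
Definition inv_arc (e : V * V) : V * V := (e.2, e.1).

Definition cabs2 (z : R[i]) : R := complex.Re z ^+ 2 + complex.Im z ^+ 2.

Definition bdry (adj : V -> V -> bool) (w : V * V -> R[i]) (psi : V * V -> R[i])
  (u : V) : R[i] :=
  \sum_(v \in [set v | adj v u]) (w (inv_arc (v, u)))^* * psi (v, u).

Definition bdry_adj (mV : V -> R) (mA : V * V -> R) (w : V * V -> R[i])
  (f : V -> R[i]) (e : V * V) : R[i] :=
  f (term e) * (mV (term e))%:C * w (inv_arc e) / (mA e)%:C.

Definition shift (psi : V * V -> R[i]) (e : V * V) : R[i] := psi (inv_arc e).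

Definition Uop (adj : V -> V -> bool) (mV : V -> R) (mA : V * V -> R)
  (w : V * V -> R[i]) (psi : V * V -> R[i]) : V * V -> R[i] :=
  shift (fun e => 2 * bdry_adj mV mA w (bdry adj w psi) e - psi e).

Definition l2normA2 (adj : V -> V -> bool) (mA : V * V -> R)
  (psi : V * V -> R[i]) : \bar R :=
  (\esum_(e in arcs adj) (cabs2 (psi e) * mA e)%:E)%E.

End QuantumWalk.

(* Write U = S C with C = 2 d^* d - 1.  The operator C acts separately on the
   arcs (v, u) entering each vertex u: with a(v) = psi(v, u) and the
   m_A-weighted inner product on these arcs, C is a |-> 2 m_V(u) <b, a> b - a
   for b(v) = w(u, v) / m_A(v, u), the reflection across the line spanned by b
   as soon as m_V(u) |b|^2 = 1.  Both settings give exactly this normalisation,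
   and both make m_A invariant under arc reversal, so that the shift S is an
   isometry as well. *)

From HB Require Import structures.
From mathcomp Require Import all_boot all_order all_algebra.
From mathcomp Require Import complex.
From mathcomp Require Import all_classical all_reals all_analysis.
From mathcomp Require Import finmap ring.
Set Implicit Arguments.
Unset Strict Implicit.
Unset Printing Implicit Defensive.
Import Order.TTheory GRing.Theory Num.Theory.
Local Open Scope ring_scope.
Local Open Scope classical_set_scope.
Local Open Scope complex_scope.

Section SquaredModulus.
Variable R : realType.

(* Under [complex_scope], [z^*] is [conjc z], except inside a big operator,
   whose body is read in [ring_scope] where it is [Num.conj z] (as in [bdry]).
   We state everything with [Num.conj], writing [^*%R] outside big operators. *)

Lemma conjCM (x y : R[i]) : (x * y)^*%R = x^*%R * y^*%R. Proof. exact: rmorphM. Qed.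

Lemma conjCB (x y : R[i]) : (x - y)^*%R = x^*%R - y^*%R. Proof. exact: rmorphB. Qed.

Lemma conjCV (x : R[i]) : (x^-1)^*%R = (x^*%R)^-1. Proof. exact: fmorphV. Qed.

Lemma conjC_sum (I : Type) (s : seq I) (F : I -> R[i]) :
  (\sum_(i <- s) F i)^*%R = \sum_(i <- s) (F i)^*.
Proof. exact: rmorph_sum. Qed.

Lemma conjC_complex_real (x : R) : (x%:C)^*%R = x%:C. Proof. exact: conjc_real. Qed.

Lemma cabs2E (z : R[i]) : (cabs2 z)%:C = z * z^*%R.
Proof. by rewrite /cabs2 add_Re2_Im2 sqr_normc. Qed.

Lemma cabs2_real (x : R) : cabs2 x%:C = x ^+ 2.
Proof. by rewrite /cabs2 /= expr0n addr0. Qed.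

Lemma cabs2_ge0 (z : R[i]) : 0 <= cabs2 z.
Proof. by rewrite /cabs2 addr_ge0 ?sqr_ge0. Qed.

Lemma sum_cabs2_mulE (I : Type) (s : seq I) (f : I -> R[i]) (m : I -> R) :
  (\sum_(i <- s) cabs2 (f i) * m i)%:C = \sum_(i <- s) f i * (f i)^* * (m i)%:C.
Proof. by rewrite rmorph_sum; apply: eq_bigr => i _; rewrite rmorphM -cabs2E. Qed.

End SquaredModulus.

Section WeightedReflection.
Variables (R : realType) (I : eqType) (s : seq I) (m : I -> R) (c : I -> R[i]) (M : R).
Hypothesis m_neq0 : forall i, i \in s -> m i != 0.
Hypothesis c_normalized : M * \sum_(i <- s) cabs2 (c i) / m i = 1.

Lemma reflection_weighted_norm (a : I -> R[i]) :
  \sum_(i <- s) cabs2 (2 * ((\sum_(j <- s) (c j)^* * a j) * M%:C * c i / (m i)%:C) - a i) * m i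
  = \sum_(i <- s) cabs2 (a i) * m i.
Proof.
set S := \sum_(j <- s) (c j)^* * a j.
have conjS : S^*%R = \sum_(j <- s) c j * (a j)^*.
  by rewrite conjC_sum; apply: eq_bigr => j _; rewrite conjCM conjCK mulrC.
have c_normalizedC : M%:C * \sum_(i <- s) c i * (c i)^* / (m i)%:C = 1.
  rewrite -[1]/(1%:C) -c_normalized rmorphM rmorph_sum; congr (_ * _).
  by apply: eq_bigr => i _; rewrite rmorphM fmorphV -cabs2E.
apply: complexI; rewrite !sum_cabs2_mulE.
transitivity (\sum_(i <- s) (4 * S * S^*%R * M%:C * (M%:C * (c i * (c i)^* / (m i)%:C))
   - 2 * S * M%:C * (c i * (a i)^*) - 2 * S^*%R * M%:C * ((c i)^* * a i)
   + a i * (a i)^* * (m i)%:C)).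
  apply: eq_big_seq => i s_i.
  have mC : (m i)%:C != 0 by rewrite eq_complex /= eqxx andbT m_neq0.
  rewrite conjCB !conjCM conjCV !conjC_complex_real conjC_nat.
  by field.
rewrite !big_split /= !sumrN -!mulr_sumr c_normalizedC -conjS -/S.
ring.
Qed.

End WeightedReflection.

Section ArcSums.
Variables (R : realType) (V : choiceType) (adj : V -> V -> bool).
Local Open Scope ereal_scope.

Lemma arcs_inv_arc (e : V * V) : symmetric_adj adj -> arcs adj e -> arcs adj (inv_arc e).
Proof. by case: e => u v adj_sym; rewrite /arcs /= adj_sym. Qed.

Lemma arcs_swap (u v : V) : symmetric_adj adj -> adj u v -> arcs adj (v, u).
Proof. by move=> adj_sym; apply: (@arcs_inv_arc (u, v)). Qed.

Lemma esum_arcs_inv_arc (f : V * V -> \bar R) : symmetric_adj adj ->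
  \esum_(e in arcs adj) f (inv_arc e) = \esum_(e in arcs adj) f e.
Proof.
move=> adj_sym; apply/esym/reindex_esum; split.
- by move=> e /arcs_inv_arc; apply.
- by move=> [u v] [u' v'] _ _ [-> ->].
- by move=> [u v] uv; exists (v, u) => //; apply: arcs_inv_arc uv.
Qed.

Lemma esum_arcs_by_term (f : V * V -> \bar R) : (forall e, arcs adj e -> 0 <= f e) ->
  \esum_(e in arcs adj) f e = \esum_(u in setT) \esum_(v in [set v | adj v u]) f (v, u).
Proof.
move=> f_ge0; rewrite esum_esum; last by move=> u v _ vu; apply: f_ge0.
apply: (reindex_esum _ _ (fun e : V * V => (e.2, e.1))); split.
- by move=> [u v] [_ /=].
- by move=> [u v] [u' v'] _ _ [-> ->].
- by move=> [v u] vu; exists (u, v).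
Qed.

Lemma esum_finite_setE (A : set V) (g : V -> R) : finite_set A ->
  (forall x, A x -> (0 <= g x)%R) -> \esum_(x in A) (g x)%:E = (\sum_(x \in A) g x)%:E.
Proof.
move=> finA g_ge0; rewrite esum_fset ?fsumEFin //.
by move=> x; rewrite in_setE lee_fin => /g_ge0.
Qed.

End ArcSums.

Section NormPreservation.
Variables (R : realType) (V : choiceType) (adj : V -> V -> bool).
Variables (mV : V -> R) (mA : V * V -> R) (w : V * V -> R[i]).
Hypothesis adj_sym : symmetric_adj adj.
Hypothesis adj_lf : locally_finite adj.
Hypothesis mA_gt0 : forall e, arcs adj e -> 0 < mA e.
Hypothesis mA_inv_arc : forall e, arcs adj e -> mA (inv_arc e) = mA e.
Hypothesis w_normalized :
  forall u, mV u * \sum_(v \in [set v | adj u v]) cabs2 (w (u, v)) / mA (v, u) = 1.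

Definition coin (psi : V * V -> R[i]) (e : V * V) : R[i] :=
  2 * bdry_adj mV mA w (bdry adj w psi) e - psi e.

Lemma Uop_shift_coin (psi : V * V -> R[i]) : Uop adj mV mA w psi = shift (coin psi).
Proof. by []. Qed.

Lemma in_neighbours_sym (u : V) : [set v | adj v u] = [set v | adj u v].
Proof. by apply: funext => v /=; rewrite adj_sym. Qed.

Lemma finite_in_neighbours (u : V) : finite_set [set v | adj v u].
Proof. by rewrite in_neighbours_sym; apply: adj_lf. Qed.

Lemma weighted_cabs2_ge0 (psi : V * V -> R[i]) (e : V * V) :
  arcs adj e -> 0 <= cabs2 (psi e) * mA e.
Proof. by move=> ae; rewrite mulr_ge0 ?cabs2_ge0 // ltW // mA_gt0. Qed.

Lemma l2normA2_shift (psi : V * V -> R[i]) :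
  l2normA2 adj mA (shift psi) = l2normA2 adj mA psi.
Proof.
rewrite /l2normA2 -[RHS](esum_arcs_inv_arc _ adj_sym); apply: eq_esum => e ae.
by rewrite /shift mA_inv_arc.
Qed.

Lemma esum_coin_in_neighbours (psi : V * V -> R[i]) (u : V) :
  (\esum_(v in [set v | adj v u]) (cabs2 (coin psi (v, u)) * mA (v, u))%:E =
   \esum_(v in [set v | adj v u]) (cabs2 (psi (v, u)) * mA (v, u))%:E)%E.
Proof.
have vu_arc v : v \in fset_set [set v | adj v u] -> arcs adj (v, u).
  by rewrite (in_fset_set (finite_in_neighbours u)) in_setE.
rewrite !esum_finite_setE; try exact: finite_in_neighbours;
  try by move=> v vu; apply: weighted_cabs2_ge0.
congr (_%:E); rewrite /coin /bdry_adj /bdry /= !fsbig_finite;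
  try exact: finite_in_neighbours.
apply: reflection_weighted_norm => [v /vu_arc /mA_gt0 /lt0r_neq0 //|].
have := w_normalized u; rewrite -in_neighbours_sym fsbig_finite //.
exact: finite_in_neighbours.
Qed.

Lemma l2normA2_coin (psi : V * V -> R[i]) :
  l2normA2 adj mA (coin psi) = l2normA2 adj mA psi.
Proof.
rewrite /l2normA2 !esum_arcs_by_term;
  try by move=> e ae; rewrite lee_fin weighted_cabs2_ge0.
by apply: eq_esum => u _; apply: esum_coin_in_neighbours.
Qed.

Lemma l2normA2_Uop (psi : V * V -> R[i]) :
  l2normA2 adj mA (Uop adj mV mA w psi) = l2normA2 adj mA psi.
Proof. by rewrite Uop_shift_coin l2normA2_shift l2normA2_coin. Qed.

End NormPreservation.

Section Settings.
Variables (R : realType) (V : choiceType) (adj : V -> V -> bool).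
Variables (mV : V -> R) (mA : V * V -> R) (w : V * V -> R[i]).
Hypothesis adj_sym : symmetric_adj adj.

Lemma normalized_setting1 (u : V) :
  \sum_(v \in [set v | adj u v]) cabs2 (w (u, v)) = 1 -> mV u = 1 ->
  (forall e, arcs adj e -> mA e = 1) ->
  mV u * \sum_(v \in [set v | adj u v]) cabs2 (w (u, v)) / mA (v, u) = 1.
Proof.
move=> w_sum mV1 mA1; rewrite mV1 mul1r -w_sum; apply: eq_fsbigr => v.
by rewrite in_setE => uv; rewrite mA1 ?divr1 //; exact: arcs_swap.
Qed.

Lemma mA_inv_arc_setting2 :
  (forall e, arcs adj e ->
     (mA e)%:C = (mV (orig e))%:C * w e /\ (mA e)%:C = (mV (term e))%:C * w (inv_arc e)) ->
  forall e, arcs adj e -> mA (inv_arc e) = mA e.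
Proof.
move=> mA_w e ae; apply: complexI.
by rewrite (mA_w _ (arcs_inv_arc adj_sym ae)).1 (mA_w e ae).2.
Qed.

Lemma normalized_setting2 (u : V) :
  locally_finite adj -> 0 < mV u -> (forall e, arcs adj e -> 0 < mA e) ->
  \sum_(v \in [set v | adj u v]) w (u, v) = 1 ->
  (forall e, arcs adj e -> (mA e)%:C = (mV (term e))%:C * w (inv_arc e)) ->
  mV u * \sum_(v \in [set v | adj u v]) cabs2 (w (u, v)) / mA (v, u) = 1.
Proof.
move=> adj_lf mV_gt0 mA_gt0 w_sum mA_w.
have w_real v : adj u v -> w (u, v) = (mA (v, u) / mV u)%:C.
  move=> uv; have mVC : (mV u)%:C != 0 by rewrite eq_complex /= eqxx andbT gt_eqF.
  apply: (mulfI mVC); rewrite -rmorphM mulrCA divff ?gt_eqF // mulr1.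
  exact/esym/(mA_w (v, u) (arcs_swap adj_sym uv)).
rewrite mulr_fsumr.
transitivity (\sum_(v \in [set v | adj u v]) mA (v, u) / mV u).
  apply: eq_fsbigr => v; rewrite in_setE => uv.
  have mA_neq0 : mA (v, u) != 0.
    by rewrite gt_eqF // mA_gt0 //; exact: arcs_swap.
  rewrite w_real // cabs2_real; field.
  by rewrite mA_neq0 gt_eqF.
apply: complexI; rewrite fsbig_finite // rmorph_sum -[1%:C]/(1 : R[i]) -w_sum fsbig_finite //.
by apply: eq_big_seq => v; rewrite in_fset_set // in_setE => /w_real ->.
Qed.

End Settings.

Theorem proposition1 (R : realType) (V : choiceType) (adj : V -> V -> bool)
  (mV : V -> R) (mA : V * V -> R) (w : V * V -> R[i]) :
  symmetric_adj adj ->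
  locally_finite adj ->
  graph_connected adj ->
  (forall u, 0 < mV u) ->
  (forall e, arcs adj e -> 0 < mA e) ->
  ( (* Setting 1 *)
    ((forall u, \sum_(v \in [set v | adj u v]) cabs2 (w (u, v)) = 1) /\
     (forall u, mV u = 1) /\ (forall e, arcs adj e -> mA e = 1))
  \/ (* Setting 2 *)
    ((forall u, \sum_(v \in [set v | adj u v]) w (u, v) = 1) /\
     (forall e, arcs adj e ->
        (mA e)%:C = (mV (orig e))%:C * w e /\
        (mA e)%:C = (mV (term e))%:C * w (inv_arc e))) ) ->
  forall psi : V * V -> R[i],
    (l2normA2 adj mA psi < +oo)%E ->
    l2normA2 adj mA (Uop adj mV mA w psi) = l2normA2 adj mA psi.
Proof.
move=> adj_sym adj_lf _ mV_gt0 mA_gt0 setting psi _.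
case: setting => [[w_sum [mV1 mA1]] | [w_sum mA_w]]; apply: l2normA2_Uop => //.
- by move=> e ae; rewrite !mA1 //; apply: arcs_inv_arc.
- by move=> u; apply: normalized_setting1.
- exact: (mA_inv_arc_setting2 adj_sym mA_w).
- by move=> u; apply: normalized_setting2 => // e /mA_w [].
Qed.
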